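(* Let $(V,\omega)$ be a symplectic space over $\mathbb F_q$ and $\overline V=(V,-\omega)$. Let $r:H(V)\to H(\overline V)$, $r(v,z)=(v,-z)$ (a group isomorphism), and for $L^\circ\in OLag(V)=OLag(\overline V)$ let $r^*_{L^\circ}:\mathcal H_{L^\circ}(\overline V,\psi)\to\mathcal H_{L^\circ}(V,\psi^{-1})$, $f\mapsto f\circ r$. Let $\overline T$ be the canonical trivialization for $(\overline V,\psi)$ and $T$ the canonical trivialization for $(V,\psi^{-1})$. Then for all $(M^\circ,L^\circ)\in OLag(V)^2$, $$r^*_{M^\circ}\circ\overline T_{M^\circ,L^\circ}=T_{M^\circ,L^\circ}\circ r^*_{L^\circ}.$$
   Context: $q$ is a power of an odd prime. For a symplectic space $(V,\omega)$ of dimension $2n$ over $\mathbb F_q$ and a non-trivial character $\psi$ of $\mathbb F_q$: $H(V)$ is $V\times\mathbb F_q$ with $(v,z)(v',z')=(v+v',z+z'+\tfrac12\omega(v,v'))$; an oriented Lagrangian is $L^\circ=(L,o_L)$ with $L$ Lagrangian and $o_L\in\bigwedge^nL$ nonzero, $OLag(V)$ their set; $\mathcal H_{L^\circ}(V,\psi)$ is the space of $f:H(V)\to\mathbb C$ with $f((0,z)(l,0)h)=\psi(z)f(h)$ ($z\in\mathbb F_q,l\in L,h\in H(V)$), with $H(V)$ acting by right translation. $\omega_\wedge(a_1\wedge\dots\wedge a_n,b_1\wedge\dots\wedge b_n)=(-1)^{n(n-1)/2}\det(\omega(a_i,b_j))$ (computed with the form of the space in question); $\sigma$ the Legendre character;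 $G_1(\psi)=\sum_z\psi(\tfrac12z^2)$. For $M+L=V$ set $T^0_{M^\circ,L^\circ}f(h)=(G_1(\psi)/q)^n\sigma((-1)^{n(n-1)/2}\omega_\wedge(o_L,o_M))\sum_{m\in M}f((m,0)h)$. The canonical trivialization for $(V,\psi)$ is the unique family of $H(V)$-intertwining isomorphisms $T_{M^\circ,L^\circ}:\mathcal H_{L^\circ}(V,\psi)\to\mathcal H_{M^\circ}(V,\psi)$, $(M^\circ,L^\circ)\in OLag(V)^2$, with $T_{N^\circ,M^\circ}T_{M^\circ,L^\circ}=T_{N^\circ,L^\circ}$ for all triples and $T=T^0$ on pairs in general position. *)

From HB Require Import structures.
From mathcomp Require Import all_boot all_order all_algebra all_field.
Set Implicit Arguments. Unset Strict Implicit. Unset Printing Implicit Defensive.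
Import GRing.Theory Num.Theory.
Local Open Scope ring_scope.

Section Heisenberg.
Variables (F : finFieldType) (n : nat).

(* The symplectic space V = F^(2n) (row vectors); the form is given by a matrix W:
   omega(u,v) = u W v^T. *)
Definition sform (W : 'M[F]_(n.*2)) (u v : 'rV[F]_(n.*2)) : F := (u *m W *m v^T) 0 0.

(* W defines a symplectic form: skew (= alternating in odd char) and nondegenerate. *)
Definition symplectic (W : 'M[F]_(n.*2)) : bool := (W^T == - W) && (W \in unitmx).

Definition heis : finType := ('rV[F]_(n.*2) * F)%type.

Definition hmul (W : 'M[F]_(n.*2)) (h h' : heis) : heis :=
  (h.1 + h'.1, h.2 + h'.2 + 2%:R^-1 * sform W h.1 h'.1).

(* An oriented Lagrangian L° = (L, o_L) is represented by a basis matrix B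
   (rows b_1..b_n, L = row space of B, o_L = b_1 /\ ... /\ b_n). *)
Definition is_olag (W : 'M[F]_(n.*2)) (B : 'M[F]_(n, n.*2)) : bool :=
  row_free B && (B *m W *m B^T == 0).

Definition same_olag (B B' : 'M[F]_(n, n.*2)) : Prop :=
  exists P : 'M[F]_n, \det P = 1 /\ B' = P *m B.

Definition additive_char (psi : F -> algC) : Prop :=
  forall a b, psi (a + b) = psi a * psi b.

Definition nontrivial_char (psi : F -> algC) : Prop := exists z, psi z != 1.

Definition in_schr (W : 'M[F]_(n.*2)) (psi : F -> algC) (B : 'M[F]_(n, n.*2))
  (f : {ffun heis -> algC}) : Prop :=
  forall (z : F) (l : 'rV[F]_(n.*2)) (h : heis), (l <= B)%MS ->
    f (hmul W (0, z) (hmul W (l, 0) h)) = psi z * f h.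

Definition rtrans (W : 'M[F]_(n.*2)) (g : heis) (f : {ffun heis -> algC})
  : {ffun heis -> algC} := [ffun h => f (hmul W h g)].

Definition owedge (W : 'M[F]_(n.*2)) (A B : 'M[F]_(n, n.*2)) : F :=
  (-1) ^+ ((n * (n - 1)) %/ 2)%N * \det (A *m W *m B^T).

Definition legendre (x : F) : algC :=
  if x == 0 then 0 else if [exists y : F, y ^+ 2 == x] then 1 else -1.

Definition G1 (psi : F -> algC) : algC := \sum_(z : F) psi (2%:R^-1 * z ^+ 2).

Definition transversal (M L : 'M[F]_(n, n.*2)) : bool := row_full (col_mx M L).

Definition T0 (W : 'M[F]_(n.*2)) (psi : F -> algC) (M L : 'M[F]_(n, n.*2))
  (f : {ffun heis -> algC}) : {ffun heis -> algC} :=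
  [ffun h => (G1 psi / #|F|%:R) ^+ n
     * legendre ((-1) ^+ ((n * (n - 1)) %/ 2)%N * owedge W L M)
     * \sum_(m : 'rV[F]_(n.*2) | (m <= M)%MS) f (hmul W (m, 0) h)].

(* T is (the) canonical trivialization for (V = (F^(2n), W), psi):
   a family of H(V)-intertwining isomorphisms H_{L°} -> H_{M°}, indexed by
   pairs of oriented Lagrangians (so invariant under change of basis with the
   same orientation), transitive, and equal to T0 on pairs in general position. *)
Definition canon_triv (W : 'M[F]_(n.*2)) (psi : F -> algC)
  (T : 'M[F]_(n, n.*2) -> 'M[F]_(n, n.*2) -> {ffun heis -> algC} -> {ffun heis -> algC})
  : Prop :=
      (forall M M' L L', is_olag W M -> is_olag W L -> same_olag M M' -> same_olag L L' ->
         forall f, in_schr W psi L f -> T M' L' f = T M L f) /\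
      (forall M L, is_olag W M -> is_olag W L ->
         forall f, in_schr W psi L f -> in_schr W psi M (T M L f)) /\
      (forall M L, is_olag W M -> is_olag W L ->
         forall (a : algC) f g, in_schr W psi L f -> in_schr W psi L g ->
           T M L [ffun h => a * f h + g h] = [ffun h => a * T M L f h + T M L g h]) /\
      (forall M L, is_olag W M -> is_olag W L ->
         (forall f g, in_schr W psi L f -> in_schr W psi L g ->
            T M L f = T M L g -> f = g) /\
         (forall g, in_schr W psi M g -> exists2 f, in_schr W psi L f & T M L f = g)) /\
      (forall M L, is_olag W M -> is_olag W L ->
         forall f g, in_schr W psi L f -> T M L (rtrans W g f) = rtrans W g (T M L f)) /\
      (forall N M L, is_olag W N -> is_olag W M -> is_olag W L ->
         forall f, in_schr W psi L f -> T N M (T M L f) = T N L f) /\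
      (forall M L, is_olag W M -> is_olag W L -> transversal M L ->
         forall f, in_schr W psi L f -> T M L f = T0 W psi M L f).

Definition rstar (f : {ffun heis -> algC}) : {ffun heis -> algC} :=
  [ffun h : heis => f (h.1, - h.2)].

End Heisenberg.

(* Write T^0 for the explicit operators of the general-position formula and
   Tbar^0 for those of (V,-omega).  The proof rests on two facts.

   1. Geometry: for any two Lagrangians M, L of a symplectic space in odd
      characteristic there is a Lagrangian N transversal to both.  N is built
      one vector at a time: an isotropic N_k meeting M and L trivially can be
      enlarged by a vector of N_k^perp avoiding both N_k + M and N_k + L,
      which exists by a dimension count.  Transitivity and normalisation then
      force  T_{M,L} = T^0_{M,N} T^0_{N,L}  for every canonical trivialization.

   2. Arithmetic: r^* Tbar^0_{M,N} = T^0_{M,N} r^*.  The sums over M agree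
      since r is an isomorphism H(V) -> H(V-bar); the constants agree because
      omega_wedge changes by (-1)^n under omega |-> -omega, while
      G_1(psi^-1) = sigma(-1) G_1(psi) (a quadratic Gauss sum evaluation
      using multiplicativity of the Legendre symbol). *)

From Pilot Require Import Defs.
From HB Require Import structures.
From mathcomp Require Import all_boot all_order all_algebra all_field.
From mathcomp Require Import all_fingroup all_solvable zify.
Import GRing.Theory Num.Theory.
Local Open Scope ring_scope.
Set Implicit Arguments. Unset Strict Implicit. Unset Printing Implicit Defensive.

Section RowSpaces.
Variables (K : fieldType) (m : nat).

Lemma rank_adds_row k (A : 'M[K]_(k, m)) (v : 'rV[K]_m) :
  ~~ (v <= A)%MS -> \rank (A + v)%MS = (\rank A).+1.
Proof.
move=> vA; have v0 : v != 0 by apply: contraNneq vA => ->; apply: sub0mx.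
suff capA0 : \rank (A :&: v)%MS = 0%N.
  by have := mxrank_sum_cap A v; rewrite capA0 rank_rV v0 addn0 addn1.
apply/eqP; rewrite -leqn0 leqNgt; apply/negP => rk_pos.
have capv : (v <= A :&: v)%MS.
  by rewrite -(geq_leqif (mxrank_leqif_sup (capmxSr A v))) rank_rV v0.
by move/negP: vA; apply; apply: submx_trans capv (capmxSl _ _).
Qed.

Lemma exists_row_outside k j (P : 'M[K]_(k, m)) (X : 'M[K]_(j, m)) :
  (\rank X < \rank P)%N -> exists2 a : 'rV[K]_m, (a <= P)%MS & ~~ (a <= X)%MS.
Proof.
move=> rXP; have : ~~ (P <= X)%MS by apply/negP => /mxrankS; rewrite leqNgt rXP.
by case/row_subPn => i Hi; exists (row i P) => //; apply: row_sub.
Qed.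

(* A space not contained in X nor in Y has a vector avoiding both:
   if a avoids X only and b avoids Y only, then a + b avoids both. *)
Lemma exists_row_outside2 k j p (P : 'M[K]_(k, m)) (X : 'M[K]_(j, m))
  (Y : 'M[K]_(p, m)) (a b : 'rV[K]_m) :
  (a <= P)%MS -> ~~ (a <= X)%MS -> (b <= P)%MS -> ~~ (b <= Y)%MS ->
  exists v : 'rV[K]_m, [/\ (v <= P)%MS, ~~ (v <= X)%MS & ~~ (v <= Y)%MS].
Proof.
move=> aP aX bP bY.
have [aY|] := boolP (a <= Y)%MS; last by exists a.
have [bX|] := boolP (b <= X)%MS; last by exists b.
exists (a + b); split; first exact: addmx_sub.
- apply: contra aX => abX.
  by rewrite -(addrK b a); apply: addmx_sub => //; rewrite eqmx_opp.
- apply: contra bY => abY.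
  by rewrite -(addKr a b) addrC; apply: addmx_sub => //; rewrite eqmx_opp.
Qed.

End RowSpaces.

Section SymplecticGeometry.
Variables (K : fieldType) (n : nat) (W : 'M[K]_(n.*2)).
Hypothesis W_skew : W^T = - W.
Hypothesis W_unit : W \in unitmx.
Hypothesis two_neq0 : (2%:R : K) != 0.

Definition perp k (A : 'M[K]_(k, n.*2)) : 'M[K]_(n.*2) := kermx (W *m A^T).

Lemma sub_perp k j (B : 'M[K]_(j, n.*2)) (A : 'M[K]_(k, n.*2)) :
  (B <= perp A)%MS = (B *m W *m A^T == 0).
Proof. by rewrite sub_kermx mulmxA. Qed.

Lemma perp_sym k j (B : 'M[K]_(j, n.*2)) (A : 'M[K]_(k, n.*2)) :
  (B <= perp A)%MS = (A <= perp B)%MS.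
Proof.
have flip (X : 'M[K]_(j, n.*2)) (Y : 'M[K]_(k, n.*2)) :
    (Y *m W *m X^T)^T = - (X *m W *m Y^T).
  by rewrite !trmx_mul trmxK W_skew mulNmx mulmxN mulmxA.
by rewrite !sub_perp -oppr_eq0 -flip trmx_eq0.
Qed.

Lemma rank_perp k (A : 'M[K]_(k, n.*2)) : \rank (perp A) = (n.*2 - \rank A)%N.
Proof.
have W_full : row_full W by rewrite row_full_unit.
by rewrite /perp mxrank_ker (eqmxMfull _ W_full) mxrank_tr.
Qed.

Lemma perp_adds k j p (A : 'M[K]_(k, n.*2)) (B : 'M[K]_(j, n.*2))
  (X : 'M[K]_(p, n.*2)) :
  (X <= perp A)%MS -> (X <= perp B)%MS -> (X <= perp (A + B)%MS)%MS.
Proof. by rewrite !(perp_sym X) addsmx_sub => -> ->. Qed.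

(* In odd characteristic a skew form is alternating: v is isotropic. *)
Lemma isotropic_row (v : 'rV[K]_(n.*2)) : v *m W *m v^T = 0.
Proof.
set x := v *m W *m v^T.
have xT : x^T = - x by rewrite /x !trmx_mul trmxK W_skew mulNmx mulmxN mulmxA.
apply/matrixP => i j; rewrite !ord1 mxE.
have /eqP := congr1 (fun A : 'M[K]_1 => A 0 0) xT; rewrite !mxE.
rewrite -subr_eq0 opprK -mulr2n -mulr_natr mulf_eq0 (negbTE two_neq0) orbF.
by move/eqP.
Qed.

(* If N (isotropic, dim k < n) meets the Lagrangian Q trivially, then
   N^perp is not contained in N + Q: otherwise N^perp ∩ Q, of dimension
   n - k > 0, would be orthogonal to N + Q, of dimension n + k. *)
Lemma perp_not_in_adds k (N : 'M[K]_(n.*2)) (Q : 'M[K]_(n, n.*2)) :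
  (k < n)%N -> \rank N = k -> \rank Q = n -> (Q <= perp Q)%MS ->
  \rank (N + Q)%MS = (k + n)%N ->
  (\rank (perp N :&: (N + Q))%MS < \rank (perp N))%N.
Proof.
move=> kn rN rQ isoQ rNQ; set P := perp N.
have rP : \rank P = (n.*2 - k)%N by rewrite rank_perp rN.
have PQ_perp : (P :&: Q <= perp (N + Q)%MS)%MS.
  apply: perp_adds; first exact: capmxSl.
  exact: submx_trans (capmxSr _ _) isoQ.
have rPQ := mxrankS PQ_perp; rewrite rank_perp rNQ in rPQ.
have e1 := mxrank_sum_cap P Q.
have e2 := mxrank_sum_cap P (N + Q)%MS.
have s12 : (\rank (P + Q)%MS <= \rank (P + (N + Q))%MS)%N.
  by apply/mxrankS/addsmxS => //; apply: addsmxSr.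
have top : (\rank (P + (N + Q))%MS <= n.*2)%N by apply: rank_leq_col.
move: e1 e2 rPQ s12 top; rewrite rP rQ rNQ.
move: (\rank (P + Q)%MS) (\rank (P :&: Q)%MS) (\rank (P + (N + Q))%MS).
move: (\rank (P :&: (N + Q))%MS); rewrite -addnn; lia.
Qed.

Variables (L M : 'M[K]_(n, n.*2)).
Hypotheses (rank_L : \rank L = n) (rank_M : \rank M = n).
Hypotheses (iso_L : (L <= perp L)%MS) (iso_M : (M <= perp M)%MS).

Lemma isotropic_common_complement k : (k <= n)%N -> exists N : 'M[K]_(n.*2),
  [/\ \rank N = k, (N <= perp N)%MS, \rank (N + L)%MS = (k + n)%N
    & \rank (N + M)%MS = (k + n)%N].
Proof.
elim: k => [_ | k IH kn].
  by exists 0; rewrite mxrank0 sub0mx !adds0mx rank_L rank_M.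
have [N [rN isoN rNL rNM]] := IH (ltnW kn).
have [a aP aL] := exists_row_outside (perp_not_in_adds kn rN rank_L iso_L rNL).
have [b bP bM] := exists_row_outside (perp_not_in_adds kn rN rank_M iso_M rNM).
have [v [vP vL vM]] := exists_row_outside2 aP aL bP bM.
rewrite sub_capmx vP in vL; rewrite sub_capmx vP in vM.
have vN : ~~ (v <= N)%MS.
  by apply: contra vL => /submx_trans; apply; apply: addsmxSl.
have addv_comm (Q : 'M[K]_(n, n.*2)) : (N + v + Q :=: N + Q + v)%MS.
  by rewrite -addsmxA (addsmxC v) addsmxA.
exists (N + v)%MS; split.
- by rewrite rank_adds_row // rN.
- apply: perp_adds; rewrite addsmx_sub ?isoN ?vP //.
  by rewrite perp_sym vP sub_perp isotropic_row eqxx.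
- by rewrite (addv_comm L) rank_adds_row // rNL.
- by rewrite (addv_comm M) rank_adds_row // rNM.
Qed.

End SymplecticGeometry.

Lemma common_transversal (F : finFieldType) (n : nat) (W : 'M[F]_(n.*2))
  (M L : 'M[F]_(n, n.*2)) :
  (2%:R : F) != 0 -> symplectic W -> is_olag W M -> is_olag W L ->
  exists N : 'M[F]_(n, n.*2),
    [/\ is_olag W N, Defs.transversal M N & Defs.transversal N L].
Proof.
move=> two_neq0 /andP[/eqP W_skew W_unit].
move=> /andP[/eqP rM isoM] /andP[/eqP rL isoL].
rewrite -sub_perp in isoM; rewrite -sub_perp in isoL.
have [N0 [rN0 isoN0 rN0L rN0M]] :=
  isotropic_common_complement W_skew W_unit two_neq0 rL rM isoL isoM (leqnn n).
set N := castmx (rN0, erefl (n.*2)) (row_base N0).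
have eN : (N :=: N0)%MS := eqmx_trans (eqmx_cast _ _) (eq_row_base N0).
exists N; split.
- by rewrite /is_olag /row_free eN rN0 eqxx -sub_perp eN (perp_sym W_skew) eN.
- rewrite /Defs.transversal /row_full -addsmxE addsmxC.
  by rewrite (adds_eqmx eN (eqmx_refl M)) rN0M addnn.
- rewrite /Defs.transversal /row_full -addsmxE.
  by rewrite (adds_eqmx eN (eqmx_refl L)) rN0L addnn.
Qed.

Section Legendre.
Variable F : finFieldType.
Hypothesis two_neq0 : (2%:R : F) != 0.

Local Notation is_square x := [exists y : F, y ^+ 2 == x].

Lemma even_pow_square (g : F) i : ~~ odd i -> is_square (g ^+ i).
Proof.
move=> ev_i; apply/existsP; exists (g ^+ i./2).
by rewrite -exprM -{2}(odd_double_half i) (negbTE ev_i) add0n -muln2.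
Qed.

(* The product of two nonsquares is a square, because F^* is cyclic. *)
Lemma nonsquareM (x y : F) : x != 0 -> y != 0 ->
  ~~ is_square x -> ~~ is_square y -> is_square (x * y).
Proof.
move=> x0 y0.
have /cyclicP [g gen] := field_unit_group_cyclic [set: {unit F}]%G.
have pow_g (u : F) : u != 0 -> exists i, u = FinRing.uval g ^+ i.
  move=> u0; have Uu : u \is a GRing.unit by rewrite unitfE.
  have : FinRing.Unit Uu \in <[g]>%g by rewrite -gen inE.
  by case/cycleP => i ui; exists i; rewrite -FinRing.val_unitX -ui.
have [i ->] := pow_g x x0; have [j ->] := pow_g y y0.
have [oi|ei] := boolP (odd i); last by rewrite (even_pow_square _ ei).
have [oj|ej] := boolP (odd j); last by rewrite (even_pow_square _ ej).
by rewrite -exprD even_pow_square // oddD oi oj.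
Qed.

Lemma squareMl (x y : F) :
  x != 0 -> is_square x -> is_square (x * y) = is_square y.
Proof.
move=> x0 /existsP [a /eqP ax].
have a0 : a != 0 by apply: contraNneq x0 => a0; rewrite -ax a0 expr0n.
apply/existsP/existsP => [[c /eqP cxy] | [b /eqP by_]].
- by exists (c / a); rewrite expr_div_n cxy -ax mulrC mulKf // expf_neq0.
- by exists (a * b); rewrite exprMn ax by_.
Qed.

Lemma legendreM (x y : F) : legendre (x * y) = legendre x * legendre y.
Proof.
rewrite /legendre mulf_eq0.
have [->|x0] := eqVneq x 0; first by rewrite /= mul0r.
have [->|y0] := eqVneq y 0; first by rewrite orbT /= mulr0.
have [sx|nx] := boolP (is_square x); first by rewrite squareMl // mul1r.
have [sy|ny] := boolP (is_square y).
  by rewrite /= (mulrC x) squareMl // (negbTE nx) mulr1.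
by rewrite nonsquareM // mulrNN mulr1.
Qed.

Lemma card_sqrt (x : F) :
  (#|[set z : F | z ^+ 2 == x]|)%:R = 1 + legendre x :> algC.
Proof.
rewrite /legendre; have [->|x0] := eqVneq x 0.
  suff -> : [set z : F | z ^+ 2 == 0] = [set 0] by rewrite cards1 addr0.
  by apply/setP => z; rewrite !inE expf_eq0.
have [/existsP [a /eqP ax]|nx] := boolP (is_square x).
  have a0 : a != 0 by apply: contraNneq x0 => a0; rewrite -ax a0 expr0n.
  have -> : [set z : F | z ^+ 2 == x] = [set a; - a].
    by apply/setP => z; rewrite !inE -ax eqf_sqr.
  rewrite cards2; suff -> : a != - a by [].
  apply: contra a0 => /eqP aNa; move/eqP: (congr1 (+%R a) aNa).
  by rewrite subrr -mulr2n -mulr_natr mulf_eq0 (negbTE two_neq0) orbF.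
suff -> : [set z : F | z ^+ 2 == x] = set0 by rewrite cards0 subrr.
apply/setP => z; rewrite !inE; apply: contraNF nx => zx.
by apply/existsP; exists z.
Qed.

Lemma sum_over_squares (h : F -> algC) :
  \sum_(z : F) h (z ^+ 2) = \sum_(x : F) h x * (1 + legendre x).
Proof.
rewrite (partition_big (fun z : F => z ^+ 2) xpredT) //=.
apply: eq_bigr => x _; rewrite -card_sqrt mulr_natr -sumr_const.
by apply: eq_big => [z|z /eqP ->]; rewrite ?inE.
Qed.

End Legendre.

Section GaussSums.
Variables (F : finFieldType) (psi : F -> algC).
Hypothesis two_neq0 : (2%:R : F) != 0.
Hypothesis psi_add : additive_char psi.
Hypothesis psi_nontriv : nontrivial_char psi.

(* psi(-a) = psi(a)^-1; this also covers the degenerate solution psi = 0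
   of the functional equation, for which both sides vanish. *)
Lemma char_opp (a : F) : psi (- a) = (psi a)^-1.
Proof.
have [pa0|pa] := eqVneq (psi a) 0.
  have p00 : psi 0 = 0 by rewrite -(subrr a) psi_add pa0 mul0r.
  by rewrite pa0 invr0 -[- a]addr0 psi_add p00 mulr0.
have p01 : psi 0 = 1 by apply: (mulfI pa); rewrite -psi_add addr0 mulr1.
by apply: (mulfI pa); rewrite -psi_add subrr p01 divff.
Qed.

Lemma char_sum0 : \sum_(x : F) psi x = 0.
Proof.
case: psi_nontriv => z pz.
have shift : \sum_(x : F) psi x = psi z * \sum_(x : F) psi x.
  rewrite [LHS](reindex_inj (addrI z)) big_distrr /=.
  by apply: eq_bigr => x _; rewrite psi_add.
have /eqP : (1 - psi z) * \sum_(x : F) psi x = 0.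
  by rewrite mulrBl mul1r -shift subrr.
by rewrite mulf_eq0 subr_eq0 eq_sym (negbTE pz) => /eqP.
Qed.

Lemma gauss_sum_legendre (c : F) : c != 0 ->
  \sum_(z : F) psi (c * z ^+ 2) = \sum_(x : F) psi (c * x) * legendre x.
Proof.
move=> c0; rewrite (sum_over_squares two_neq0 (fun x => psi (c * x))).
under eq_bigr do rewrite mulrDr mulr1.
rewrite big_split /=; suff -> : \sum_(x : F) psi (c * x) = 0 by rewrite add0r.
by have := char_sum0; rewrite (reindex_inj (mulfI c0)).
Qed.

Lemma G1_inv : G1 (fun z => (psi z)^-1) = legendre (-1 : F) * G1 psi.
Proof.
have i0 : (2%:R : F)^-1 != 0 by rewrite invr_eq0.
rewrite /G1 gauss_sum_legendre //.
under eq_bigr do rewrite -char_opp -mulNr.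
rewrite gauss_sum_legendre ?oppr_eq0 // (reindex_inj oppr_inj) big_distrr /=.
by apply: eq_bigr => x _; rewrite mulrNN -[- x]mulN1r legendreM mulrCA.
Qed.

(* The constant of T^0 transforms under psi |-> psi^-1 as a sign (-1)^k
   inside the Legendre symbol. *)
Lemma G1_inv_pow k (y : F) : G1 psi ^+ k * legendre ((-1) ^+ k * y) =
  G1 (fun z => (psi z)^-1) ^+ k * legendre y.
Proof.
elim: k y => [|k IH] y; first by rewrite !expr0 !mul1r.
have step : G1 psi * legendre (- y) = G1 (fun z => (psi z)^-1) * legendre y.
  by rewrite G1_inv mulrAC -legendreM mulN1r mulrC.
have -> : (-1) ^+ k.+1 * y = (-1) ^+ k * (- y).
  by rewrite exprS mulN1r mulNr mulrN.
by rewrite [G1 psi ^+ _]exprS -mulrA IH mulrCA step mulrA -exprSr.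
Qed.

End GaussSums.

Section Heisenberg.
Variables (F : finFieldType) (n : nat).

Definition heis_flip (h : heis F n) : heis F n := (h.1, - h.2).

Lemma rstarE (f : {ffun heis F n -> algC}) h : rstar f h = f (heis_flip h).
Proof. by rewrite ffunE. Qed.

Lemma heis_flipM (W : 'M[F]_(n.*2)) a b :
  heis_flip (hmul W a b) = hmul (- W) (heis_flip a) (heis_flip b).
Proof.
rewrite /heis_flip /hmul /sform /= mulmxN mulNmx [(- _ : 'M_1) 0 0]mxE.
by rewrite mulrN !opprD.
Qed.

Lemma olag_opp (W : 'M[F]_(n.*2)) B : is_olag (- W) B = is_olag W B.
Proof. by rewrite /is_olag mulmxN mulNmx oppr_eq0. Qed.

Lemma owedge_opp (W : 'M[F]_(n.*2)) A B :
  owedge (- W) A B = (-1) ^+ n * owedge W A B.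
Proof. by rewrite /owedge mulmxN mulNmx -scaleN1r detZ mulrCA. Qed.

Lemma canon_triv_factor (W : 'M[F]_(n.*2)) (psi : F -> algC)
  (T : 'M[F]_(n, n.*2) -> 'M[F]_(n, n.*2) ->
       {ffun heis F n -> algC} -> {ffun heis F n -> algC}) M N L f :
  canon_triv W psi T -> is_olag W M -> is_olag W N -> is_olag W L ->
  Defs.transversal M N -> Defs.transversal N L -> in_schr W psi L f ->
  T M L f = T0 W psi M N (T0 W psi N L f).
Proof.
case=> [_ [maps_to [_ [_ [_ [trans normal]]]]]] oM oN oL tMN tNL hf.
have hNL := maps_to N L oN oL f hf.
rewrite (normal N L oN oL tNL f hf) in hNL.
by rewrite -(trans M N L) // (normal N L) // (normal M N).
Qed.

Variables (psi : F -> algC).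
Hypothesis two_neq0 : (2%:R : F) != 0.
Hypothesis psi_add : additive_char psi.
Hypothesis psi_nontriv : nontrivial_char psi.

Lemma rstar_schr (W : 'M[F]_(n.*2)) L f :
  in_schr (- W) psi L f -> in_schr W (fun z => (psi z)^-1) L (rstar f).
Proof.
move=> hf z l h hl.
by rewrite !rstarE !heis_flipM /heis_flip /= oppr0 hf // char_opp.
Qed.

Lemma rstar_T0 (W : 'M[F]_(n.*2)) M L h :
  rstar (T0 (- W) psi M L h) = T0 W (fun z => (psi z)^-1) M L (rstar h).
Proof.
apply/ffunP => x; rewrite rstarE !ffunE owedge_opp.
congr (_ * _).
  rewrite mulrCA !exprMn -!mulrA [LHS]mulrCA [RHS]mulrCA; congr (_ * _).
  exact: G1_inv_pow.
by apply: eq_bigr => m _; rewrite rstarE heis_flipM /heis_flip /= oppr0.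
Qed.

End Heisenberg.

Theorem mainTheorem11 (F : finFieldType) (n : nat) (W : 'M[F]_(n.*2))
  (psi : F -> algC)
  (Tbar T : 'M[F]_(n, n.*2) -> 'M[F]_(n, n.*2) ->
            {ffun heis F n -> algC} -> {ffun heis F n -> algC}) :
  (2 \notin [pchar F])%N ->
  symplectic W ->
  additive_char psi -> nontrivial_char psi ->
  canon_triv (- W) psi Tbar ->
  canon_triv W (fun z => (psi z)^-1) T ->
  forall M L : 'M[F]_(n, n.*2), is_olag W M -> is_olag W L ->
  forall f : {ffun heis F n -> algC}, in_schr (- W) psi L f ->
    rstar (Tbar M L f) = T M L (rstar f).
Proof.
move=> char2 W_sympl psi_add psi_nontriv canon_Tbar canon_T M L oM oL f hf.
have two_neq0 : (2%:R : F) != 0.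
  by apply: contra char2 => two0; rewrite inE /= two0.
have [N [oN tMN tNL]] := common_transversal two_neq0 W_sympl oM oL.
rewrite (canon_triv_factor canon_Tbar _ _ _ tMN tNL hf) ?olag_opp //.
rewrite (canon_triv_factor canon_T oM oN oL tMN tNL (rstar_schr psi_add hf)).
by rewrite !rstar_T0.
Qed.
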